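(* Every concatenated stabiliser code family has infinite disjointness, i.e. $\lim_{l\to\infty}\Delta(l)=\infty$, where $\Delta(l)$ is the disjointness of the $l$-th code of the family.
   Context: A concatenated stabiliser code family is built from a sequence of non-trivial $[[n_i,1,d_i]]$ stabiliser quantum error-correcting codes ($i\in\mathbb{N}$) with $n_i$ bounded by a constant independent of $i$: the $l$-th code $\mathcal{C}_l$ is the $[[\prod_{i=1}^l n_i,1,\prod_{i=1}^l d_i]]$ code obtained by concatenating the first $l$ codes of the sequence (each physical qubit at one level is encoded into a block of the next code). Disjointness: for an integer $c\ge1$, a collection of representatives of a logical operator is $c$-disjoint if no physical qubit lies in the support of more than $c$ of them; the unnormalised $c$-disjointness $\Delta'_c$ is the largest integer such that every logical Pauli operator admits at least $\Delta'_c$ representatives forming a $c$-disjoint collection; $\Delta_c=\Delta'_c/c$, and the disjointness is $\Delta=\max_{c\in\mathbb{Z}_+}\Delta_c$. *)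

From HB Require Import structures.
From mathcomp Require Import all_boot all_order all_algebra.

Set Implicit Arguments.
Unset Strict Implicit.
Unset Printing Implicit Defensive.

Import Order.TTheory GRing.Theory Num.Theory.
Local Open Scope ring_scope.

(* Pauli operator on N qubits, modulo phase: X^x Z^z. *)
Definition pauli (N : nat) := ('rV['F_2]_N * 'rV['F_2]_N)%type.

(* product of Pauli operators (modulo phase) *)
Definition padd N (p q : pauli N) : pauli N := (p.1 + q.1, p.2 + q.2).

Definition pid N : pauli N := (0, 0).

(* symplectic form: 0 iff p and q commute *)
Definition symp N (p q : pauli N) : 'F_2 :=
  \sum_(i < N) (p.1 0 i * q.2 0 i + p.2 0 i * q.1 0 i).

Definition supp N (p : pauli N) : {set 'I_N} :=
  [set i | (p.1 0 i != 0) || (p.2 0 i != 0)].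
Definition weight N (p : pauli N) : nat := #|supp p|.

(* A stabiliser code encoding one logical qubit, together with a choice of
   logical X and logical Z (needed to define concatenation). *)
Record stab_code (N : nat) := StabCode {
  stab : {set pauli N};
  logX : pauli N;
  logZ : pauli N }.

(* normaliser (= centraliser modulo phase) of the stabiliser group *)
Definition normalizer N (C : stab_code N) : {set pauli N} :=
  [set p | [forall s in stab C, symp p s == 0]].

(* C is an [[N,1]] stabiliser code: the stabiliser group is an abelian group
   (modulo phase) with N-1 independent generators, and logX, logZ are
   anticommuting elements of its normaliser. *)
Definition is_stab_code_1 N (C : stab_code N) : Prop :=
  [/\ (0 < N)%N, pid N \in stab C,
      {in stab C &, forall p q, padd p q \in stab C},
      {in stab C &, forall p q, symp p q = 0}
    & #|stab C| = (2 ^ N.-1)%N ] /\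
  [/\ logX C \in normalizer C, logZ C \in normalizer C
    & symp (logX C) (logZ C) = 1].

Definition has_distance N (C : stab_code N) (d : nat) : Prop :=
  (exists2 p, p \in normalizer C :\: stab C & weight p = d) /\
  (forall p, p \in normalizer C :\: stab C -> (d <= weight p)%N).

(* Physical qubit (j, k) of the concatenated code (block j, qubit k of the
   inner code) is indexed by mxvec_index j k in 'I_(N * n). *)

(* image of an outer Pauli: on block j apply logical X^(x_j) Z^(z_j) of Cin *)
Definition encode N n (Cin : stab_code n) (p : pauli N) : pauli (N * n) :=
  (mxvec (\matrix_(j < N, k < n)
            (p.1 0 j * (logX Cin).1 0 k + p.2 0 j * (logZ Cin).1 0 k)),
   mxvec (\matrix_(j < N, k < n)
            (p.1 0 j * (logX Cin).2 0 k + p.2 0 j * (logZ Cin).2 0 k))).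

Definition blocks N n (f : {ffun 'I_N -> pauli n}) : pauli (N * n) :=
  (mxvec (\matrix_(j < N, k < n) (f j).1 0 k),
   mxvec (\matrix_(j < N, k < n) (f j).2 0 k)).

Definition concat N n (Cout : stab_code N) (Cin : stab_code n)
  : stab_code (N * n) :=
  StabCode
    [set q | [exists p in stab Cout, exists f : {ffun 'I_N -> pauli n},
                [forall j, f j \in stab Cin] &&
                (q == padd (encode Cin p) (blocks f))]]
    (encode Cin (logX Cout)) (encode Cin (logZ Cout)).

(* trivial code on one qubit (unit for concatenation) *)
Definition triv_code : stab_code 1 :=
  StabCode [set pid 1] (const_mx 1, 0) (0, const_mx 1).

Fixpoint prodn (n : nat -> nat) (l : nat) : nat :=
  match l with 0 => 1%N | l'.+1 => (prodn n l' * n l')%N end.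

(* the l-th code of the concatenated family: concatenation of C 0, ..., C (l-1)
   (outermost C 0, innermost C (l-1)); it has prod_{i<l} n i qubits. *)
Fixpoint cat_code (n : nat -> nat) (C : forall i, stab_code (n i)) (l : nat)
  : stab_code (prodn n l) :=
  match l with
  | 0 => triv_code
  | l'.+1 => concat (cat_code C l') (C l')
  end.

Definition reps N (C : stab_code N) (L : pauli N) : {set pauli N} :=
  [set padd L s | s in stab C].

Definition c_disjoint N (A : {set pauli N}) (c : nat) : bool :=
  [forall i : 'I_N, #|[set p in A | i \in supp p]| <= c]%N.

Definition max_disjoint_reps N (C : stab_code N) (L : pauli N) (c : nat) : nat :=
  \max_(A : {set pauli N} | (A \subset reps C L) && c_disjoint A c) #|A|.

(* unnormalised c-disjointness Delta'_c: minimum over the nontrivial logical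
   Pauli operators X, Z, Y (~ XZ modulo phase) *)
Definition udisj N (C : stab_code N) (c : nat) : nat :=
  minn (max_disjoint_reps C (logX C) c)
       (minn (max_disjoint_reps C (logZ C) c)
             (max_disjoint_reps C (padd (logX C) (logZ C)) c)).

Definition disj_c N (C : stab_code N) (c : nat) : rat := (udisj C c)%:R / c%:R.

(* Since Delta'_c <= #|pauli N| = 4^N, for
   c > 4^N we have Delta_c < 1 <= Delta_1 (or all Delta_c = 0 when the
   stabiliser set is empty), so the max may be taken over 1 <= c <= 4^N. *)
Definition disjointness N (C : stab_code N) : rat :=
  \big[Num.max/0]_(1 <= c < (4 ^ N).+1) disj_c C c.

From mathcomp Require Import all_boot all_order all_algebra.
From mathcomp Require Import zify ring.
Import Order.TTheory GRing.Theory Num.Theory.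
Local Open Scope ring_scope.
Set Implicit Arguments.
Unset Strict Implicit.
Unset Printing Implicit Defensive.

(* An inner code of distance at least 2 has no logical operator of weight one, so
   every element g of its normaliser agrees on each qubit k with some stabiliser s.
   Translating by s maps the stabilisers trivial on k into the u with g + u trivial
   on k; as the restriction to k takes at most four values, these form at least a
   quarter of the stabiliser group S, so at most 3|S|/4 of the coset g + S act on k.

   Given c-disjoint representatives A of a logical operator of the outer code, the
   operators acting on every block j in the support of P in A as (the encoding of
   P_j) + u, with u in S, and trivially elsewhere, are |A| |S| distinct
   representatives of the encoded operator, and every physical qubit lies in the
   support of at most c (3|S|/4) of them. Starting from the trivial code, the l-th
   code therefore has, for each nontrivial logical operator, m representatives that
   are c-disjoint with m/c >= (4/3)^l, so its disjointness is at least (4/3)^l. *)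

Lemma F2_cases (x : 'F_2) : x = 0 \/ x = 1.
Proof. by case: x => [[|[|]] //] ?; [left | right]; apply: val_inj. Qed.

Lemma F2_addxx (x : 'F_2) : x + x = 0.
Proof. exact/addrr_pchar2/pchar_Fp. Qed.

Lemma pauli_addxx N (p : pauli N) : p + p = 0.
Proof. by congr pair; apply/rowP => i; rewrite !mxE F2_addxx. Qed.

Lemma pauli_addKr N (p q : pauli N) : p + (p + q) = q.
Proof. by rewrite addrA pauli_addxx add0r. Qed.

Lemma pauli_addrI N (p q r : pauli N) : p + q = p + r -> q = r.
Proof. by move=> /(congr1 (+%R p)); rewrite !pauli_addKr. Qed.

Definition pauli_at N (p : pauli N) (k : 'I_N) : 'F_2 * 'F_2 := (p.1 0 k, p.2 0 k).

Lemma pauli_add1 N (p q : pauli N) : (p + q).1 = p.1 + q.1. Proof. by []. Qed.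

Lemma pauli_add2 N (p q : pauli N) : (p + q).2 = p.2 + q.2. Proof. by []. Qed.

Lemma pauli_atD N (p q : pauli N) k :
  pauli_at (p + q) k = pauli_at p k + pauli_at q k.
Proof. by rewrite /pauli_at !mxE. Qed.

Lemma pauli_atZ N a (p : pauli N) k :
  pauli_at (a *: p) k = (a * (pauli_at p k).1, a * (pauli_at p k).2).
Proof. by rewrite /pauli_at /= !mxE. Qed.

Lemma pauli_at0 N k : pauli_at (0 : pauli N) k = 0.
Proof. by rewrite /pauli_at !mxE. Qed.

Lemma pauli_at_inj N (p q : pauli N) :
  (forall k, pauli_at p k = pauli_at q k) -> p = q.
Proof.
case: p q => [x z] [x' z'] Epq.
by congr pair; apply/rowP => k; case: (Epq k).
Qed.

Lemma in_supp N (p : pauli N) k : (k \in supp p) = (pauli_at p k != 0).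
Proof. by rewrite inE /pauli_at -negb_and. Qed.

Lemma supp_eq0 N (p : pauli N) : (supp p == set0) = (p == 0).
Proof.
apply/eqP/eqP => [supp0 | ->]; last by apply/setP => k; rewrite in_supp pauli_at0 inE eqxx.
apply: pauli_at_inj => k; rewrite pauli_at0; apply/eqP.
by move/setP/(_ k): supp0; rewrite in_supp inE => /negbFE.
Qed.

Definition symp1 (v w : 'F_2 * 'F_2) : 'F_2 := v.1 * w.2 + v.2 * w.1.

Lemma sympE N (p q : pauli N) : symp p q = \sum_k symp1 (pauli_at p k) (pauli_at q k).
Proof. by []. Qed.

Lemma symp_sym N (p q : pauli N) : symp p q = symp q p.
Proof. by apply: eq_bigr => k _; rewrite /symp1 /=; ring. Qed.

Lemma sympDl N (p q r : pauli N) : symp (p + q) r = symp p r + symp q r.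
Proof.
rewrite !sympE -big_split; apply: eq_bigr => k _.
by rewrite pauli_atD /symp1 /=; ring.
Qed.

Lemma sympZl N a (p q : pauli N) : symp (a *: p) q = a * symp p q.
Proof.
rewrite !sympE mulr_sumr; apply: eq_bigr => k _.
by rewrite /symp1 /= !mxE; ring.
Qed.

Lemma symp_xx N (p : pauli N) : symp p p = 0.
Proof. by rewrite sympE big1 // => k _; rewrite /symp1 mulrC F2_addxx. Qed.

Lemma symp0l N (q : pauli N) : symp 0 q = 0.
Proof. by rewrite -(scale0r 0) sympZl mul0r. Qed.

Lemma normalizerP N (C : stab_code N) p :
  reflect (forall s, s \in stab C -> symp p s = 0) (p \in normalizer C).
Proof. by rewrite inE; apply: (iffP forall_inP) => H s /H /eqP. Qed.

Lemma normalizer_symp N (C : stab_code N) p s :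
  p \in normalizer C -> s \in stab C -> symp p s = 0.
Proof. by move/normalizerP; apply. Qed.

Lemma F2x2_addxx (x : 'F_2 * 'F_2) : x + x = 0.
Proof. by case: x => a b; change ((a + a, b + b) = (0, 0)); rewrite !F2_addxx. Qed.

Lemma symp1_span (x0 x v : 'F_2 * 'F_2) :
  x0 != 0 -> v != 0 -> v != x0 -> v != x -> v != x0 + x ->
  (symp1 x0 x == 0) && (symp1 x0 v == 1).
Proof.
case: x0 x v => [a b] [c e] [f g].
by case: (F2_cases a) => ->; case: (F2_cases b) => ->; case: (F2_cases c) => ->;
  case: (F2_cases e) => ->; case: (F2_cases f) => ->; case: (F2_cases g) => ->.
Qed.

Lemma symp1_nondeg (v : 'F_2 * 'F_2) : v != 0 -> exists w, symp1 w v = 1.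
Proof.
case: v => a b; case: (F2_cases a) => ->; case: (F2_cases b) => -> // _.
- by exists (1, 0); apply/eqP.
- by exists (0, 1); apply/eqP.
- by exists (1, 0); apply/eqP.
Qed.

Lemma symp1_separate (V : {set 'F_2 * 'F_2}) v :
  0 \in V -> {in V &, forall x y, x + y \in V} -> v \notin V ->
  exists w, {in V, forall x, symp1 w x = 0} /\ symp1 w v = 1.
Proof.
move=> V0 VD vV; have v_neq x : x \in V -> v != x by move=> Vx; apply: contraNneq vV => ->.
case: (pickP [pred x in V | x != 0]) => [x0 /andP[Vx0 x0_neq0] | V_eq0].
  have span x : x \in V -> (symp1 x0 x == 0) && (symp1 x0 v == 1).
    by move=> Vx; apply: symp1_span; rewrite ?v_neq ?VD.
  by exists x0; split=> [x /span/andP[/eqP] | ] //; case/andP: (span _ V0) => _ /eqP.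
have [w wv] := symp1_nondeg (v_neq _ V0); exists w; split=> // x Vx.
by move: (V_eq0 x); rewrite /= Vx => /negbFE/eqP ->; rewrite /symp1 /= !mulr0 addr0.
Qed.

Definition qubit_op N (k : 'I_N) (v : 'F_2 * 'F_2) : pauli N :=
  (\row_i (if i == k then v.1 else 0), \row_i (if i == k then v.2 else 0)).

Lemma pauli_at_qubit_op N k v i : pauli_at (@qubit_op N k v) i = if i == k then v else 0.
Proof. by rewrite /pauli_at !mxE; case: eqP => //; case: v. Qed.

Lemma symp_qubit_op N k v (p : pauli N) : symp (qubit_op k v) p = symp1 v (pauli_at p k).
Proof.
rewrite sympE (bigD1 k) //= big1 ?addr0 => [|i /negbTE ik].
  by rewrite pauli_at_qubit_op eqxx.
by rewrite pauli_at_qubit_op ik /symp1 /= !mul0r addr0.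
Qed.

Lemma weight_qubit_op N k v : (weight (@qubit_op N k v) <= 1)%N.
Proof.
rewrite /weight -(cards1 k) subset_leq_card //; apply/subsetP => i.
by rewrite in_supp pauli_at_qubit_op inE; case: (i == k); rewrite ?eqxx.
Qed.

Section NoWeightOneLogical.

Variables (n : nat) (C : stab_code n).
Hypothesis stab0 : 0 \in stab C.
Hypothesis stabD : {in stab C &, forall p q, p + q \in stab C}.
Hypothesis weight1_stab :
  forall p, p \in normalizer C -> (weight p <= 1)%N -> p \in stab C.

Lemma normalizer_agrees_stab g k : g \in normalizer C ->
  exists2 s, s \in stab C & pauli_at s k = pauli_at g k.
Proof.
move=> Ng; set V := [set pauli_at s k | s in stab C].
have [/imsetP[s Ss ->] | gV] := boolP (pauli_at g k \in V); first by exists s.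
have V0 : 0 \in V by apply/imsetP; exists 0; rewrite ?pauli_at0.
have VD : {in V &, forall x y, x + y \in V}.
  move=> _ _ /imsetP[s Ss ->] /imsetP[s' Ss' ->].
  by apply/imsetP; exists (s + s'); rewrite ?stabD ?pauli_atD.
have [w [wV wg]] := symp1_separate V0 VD gV.
have qS : qubit_op k w \in stab C.
  apply: weight1_stab (weight_qubit_op k w); apply/normalizerP => s Ss.
  by rewrite symp_qubit_op wV //; apply/imsetP; exists s.
by move/normalizerP/(_ _ qS): Ng; rewrite symp_sym symp_qubit_op wg.
Qed.

Lemma card_stab_le_kernel k :
  (#|stab C| <= 4 * #|[set u in stab C | k \notin supp u]|)%N.
Proof.
set K := [set u in stab C | _].
pose rep x := odflt 0 [pick s in stab C | pauli_at s k == x].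
have repP u : u \in stab C ->
    rep (pauli_at u k) \in stab C /\ pauli_at (rep (pauli_at u k)) k = pauli_at u k.
  by move=> Su; rewrite /rep; case: pickP => [s /andP[Ss /eqP] | /(_ u)] //=; rewrite Su eqxx.
pose phi u := (pauli_at u k, rep (pauli_at u k) + u).
have phi_inj : {in stab C &, injective phi}.
  by move=> u u' _ _ /pair_equal_spec[/= ->] /pauli_addrI.
have phiK : [set phi u | u in stab C] \subset setX [set: 'F_2 * 'F_2] K.
  apply/subsetP => _ /imsetP[u Su ->]; have [Sr r_at] := repP u Su.
  rewrite in_setX in_setT; apply/setIdP; split; first exact: stabD.
  by rewrite in_supp negbK pauli_atD r_at F2x2_addxx.
have := subset_leq_card phiK.
by rewrite card_in_imset // cardsX cardsT card_prod card_Fp.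
Qed.

Lemma card_stab_supp_le g k : g \in normalizer C ->
  (4 * #|[set u in stab C | k \in supp (g + u)%R]| <= 3 * #|stab C|)%N.
Proof.
move=> Ng; have [s0 Ss0 s0_at] := normalizer_agrees_stab k Ng.
set K := [set u in stab C | k \notin supp u].
set P := [set u | k \in supp (g + u)].
have card_S : (#|[set u in stab C | k \in supp (g + u)%R]| + #|stab C :\: P|)%N = #|stab C|.
  by rewrite setIdE cardsID.
have card_K : (#|K| <= #|stab C :\: P|)%N.
  rewrite -(card_in_imset (f := +%R s0) (D := K)); last by move=> u u' _ _ /pauli_addrI.
  apply/subset_leq_card/subsetP => _ /imsetP[u /setIdP[Su]] /[!(in_supp, negbK)] /eqP u_at ->.
  rewrite in_setD stabD // andbT inE in_supp negbK addrA !pauli_atD s0_at u_at.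
  by rewrite addr0 F2x2_addxx.
have := card_stab_le_kernel k; rewrite -/K; lia.
Qed.

End NoWeightOneLogical.

Definition block N n (j : 'I_N) (q : pauli (N * n)) : pauli n :=
  (\row_k q.1 0 (mxvec_index j k), \row_k q.2 0 (mxvec_index j k)).

Lemma pauli_at_block N n j (q : pauli (N * n)) k :
  pauli_at (block j q) k = pauli_at q (mxvec_index j k).
Proof. by rewrite /pauli_at !mxE. Qed.

Lemma block_inj N n (q q' : pauli (N * n)) :
  (forall j, block j q = block j q') -> q = q'.
Proof.
move=> Eqq'; apply: pauli_at_inj => i; case/mxvec_indexP: i => j k.
by rewrite -!pauli_at_block Eqq'.
Qed.

Lemma blockD N n j (q q' : pauli (N * n)) : block j (q + q') = block j q + block j q'.
Proof. by apply: pauli_at_inj => k; rewrite pauli_atD !pauli_at_block pauli_atD. Qed.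

Lemma block0 N n j : block j (0 : pauli (N * n)) = 0.
Proof. by apply: pauli_at_inj => k; rewrite pauli_at_block !pauli_at0. Qed.

Lemma supp_block N n (q : pauli (N * n)) j k :
  (mxvec_index j k \in supp q) = (k \in supp (block j q)).
Proof. by rewrite !in_supp pauli_at_block. Qed.

Lemma block_blocks N n (f : {ffun 'I_N -> pauli n}) j : block j (blocks f) = f j.
Proof. by apply: pauli_at_inj => k; rewrite pauli_at_block /pauli_at !mxvecE !mxE. Qed.

Definition logical_at N n (Cin : stab_code n) (P : pauli N) (j : 'I_N) : pauli n :=
  P.1 0 j *: logX Cin + P.2 0 j *: logZ Cin.

Lemma pauli_at_logical_at N n (Cin : stab_code n) (P : pauli N) j k :
  pauli_at (logical_at Cin P j) k =
  (P.1 0 j * (logX Cin).1 0 k + P.2 0 j * (logZ Cin).1 0 k,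
   P.1 0 j * (logX Cin).2 0 k + P.2 0 j * (logZ Cin).2 0 k).
Proof. by rewrite pauli_atD !pauli_atZ. Qed.

Lemma block_encode N n (Cin : stab_code n) (P : pauli N) j :
  block j (encode Cin P) = logical_at Cin P j.
Proof.
apply: pauli_at_inj => k; rewrite pauli_at_block pauli_at_logical_at.
by rewrite /pauli_at !mxvecE !mxE.
Qed.

Lemma encodeD N n (Cin : stab_code n) (P Q : pauli N) :
  encode Cin (P + Q) = encode Cin P + encode Cin Q.
Proof.
apply: block_inj => j; rewrite blockD !block_encode /logical_at.
rewrite pauli_add1 pauli_add2 !mxE !scalerDl; exact: addrACA.
Qed.

Lemma logical_at_notin_supp N n (Cin : stab_code n) (P : pauli N) j :
  j \notin supp P -> logical_at Cin P j = 0.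
Proof.
rewrite in_supp negbK /logical_at /pauli_at => /eqP[-> ->].
by rewrite !scale0r addr0.
Qed.

Definition has_disjoint_reps N (C : stab_code N) (L : pauli N) (m c : nat) :=
  exists A : {set pauli N},
    [/\ A \subset reps C L, 0 \notin A, #|A| = m & c_disjoint A c].

Definition logicals N (C : stab_code N) : seq (pauli N) :=
  [:: logX C; logZ C; logX C + logZ C].

Definition logical_disjoint_reps N (C : stab_code N) (m c : nat) :=
  {in logicals C, forall L, has_disjoint_reps C L m c}.

Lemma logicals_concat N n (Cout : stab_code N) (Cin : stab_code n) :
  logicals (concat Cout Cin) = map (encode Cin) (logicals Cout).
Proof. by rewrite /logicals /= encodeD. Qed.

Section Concatenation.

Variables (N n : nat) (Cout : stab_code N) (Cin : stab_code n).
Hypothesis Cin_code : is_stab_code_1 Cin.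
Hypothesis Cin_weight1 :
  forall p, p \in normalizer Cin -> (weight p <= 1)%N -> p \in stab Cin.

Let S := stab Cin.

Let S0 : 0 \in S. Proof. by case: Cin_code => -[]. Qed.

Let SD : {in S &, forall p q, p + q \in S}. Proof. by case: Cin_code => -[]. Qed.

Let X_normal : logX Cin \in normalizer Cin. Proof. by case: Cin_code => _ []. Qed.

Let Z_normal : logZ Cin \in normalizer Cin. Proof. by case: Cin_code => _ []. Qed.

Let sympXZ : symp (logX Cin) (logZ Cin) = 1. Proof. by case: Cin_code => _ []. Qed.

Definition concat_rep (P : pauli N) (u : pauli n) : pauli (N * n) :=
  encode Cin P + blocks [ffun j => if j \in supp P then u else 0].

Definition concat_reps (A : {set pauli N}) : {set pauli (N * n)} :=
  [set concat_rep x.1 x.2 | x in setX A S].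

Lemma block_concat_rep (P : pauli N) (u : pauli n) j :
  block j (concat_rep P u) = logical_at Cin P j + (if j \in supp P then u else 0).
Proof. by rewrite blockD block_encode block_blocks ffunE. Qed.

Lemma logical_at_normalizer (P : pauli N) j : logical_at Cin P j \in normalizer Cin.
Proof.
apply/normalizerP => s Ss; rewrite sympDl !sympZl.
by rewrite (normalizer_symp X_normal Ss) (normalizer_symp Z_normal Ss) !mulr0 addr0.
Qed.

Lemma symp_logical_at_Z (P : pauli N) j : symp (logical_at Cin P j) (logZ Cin) = P.1 0 j.
Proof.
rewrite sympDl !sympZl sympXZ symp_xx.
by rewrite mulr1 mulr0 addr0.
Qed.

Lemma symp_logical_at_X (P : pauli N) j : symp (logical_at Cin P j) (logX Cin) = P.2 0 j.
Proof.
rewrite sympDl !sympZl symp_xx symp_sym sympXZ.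
by rewrite mulr1 mulr0 add0r.
Qed.

Lemma decode_concat_rep (P : pauli N) (u : pauli n) j : u \in S ->
  (symp (block j (concat_rep P u)) (logZ Cin),
   symp (block j (concat_rep P u)) (logX Cin)) = pauli_at P j.
Proof.
move=> Su; have Sj : (if j \in supp P then u else 0) \in S by case: ifP.
rewrite block_concat_rep !(sympDl (logical_at Cin P j)) symp_logical_at_Z symp_logical_at_X.
rewrite !(symp_sym (if _ then _ else _)).
by rewrite (normalizer_symp X_normal Sj) (normalizer_symp Z_normal Sj) !addr0.
Qed.

Lemma concat_rep_eq_outer (P P' : pauli N) (u u' : pauli n) : u \in S -> u' \in S ->
  concat_rep P u = concat_rep P' u' -> P = P'.
Proof.
move=> Su Su' E; apply: pauli_at_inj => j.
by rewrite -(decode_concat_rep P j Su) -(decode_concat_rep P' j Su') E.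
Qed.

Lemma concat_rep_eq0 (P : pauli N) (u : pauli n) : u \in S -> concat_rep P u = 0 -> P = 0.
Proof.
move=> Su E; apply: pauli_at_inj => j.
by rewrite -(decode_concat_rep P j Su) E block0 !symp0l pauli_at0.
Qed.

Lemma concat_rep_inj (A : {set pauli N}) : 0 \notin A ->
  {in setX A S &, injective (fun x => concat_rep x.1 x.2)}.
Proof.
move=> A0 [P u] [P' u'] /setXP[AP Su] /setXP[_ Su'] /= E.
have EP := concat_rep_eq_outer Su Su' E; subst P'.
have /set0Pn[j jP] : supp P != set0 by rewrite supp_eq0; apply: contraNneq A0 => <-.
by move: (congr1 (block j) E); rewrite !block_concat_rep jP => /pauli_addrI ->.
Qed.

Lemma concat_rep_reps (L P : pauli N) (u : pauli n) : P \in reps Cout L -> u \in S ->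
  concat_rep P u \in reps (concat Cout Cin) (encode Cin L).
Proof.
case/imsetP => s Ss -> Su; apply/imsetP.
set f := [ffun j => if j \in supp (L + s) then u else 0].
exists (encode Cin s + blocks f).
  rewrite inE; apply/exists_inP; exists s => //; apply/existsP; exists f.
  by rewrite eqxx andbT; apply/forallP => j; rewrite ffunE; case: ifP.
by rewrite /concat_rep encodeD; exact/esym/addrA.
Qed.

Lemma supp_concat_rep (P : pauli N) (u : pauli n) j k :
  (mxvec_index j k \in supp (concat_rep P u)) =
  (j \in supp P) && (k \in supp (logical_at Cin P j + u)).
Proof.
rewrite supp_block block_concat_rep; case: ifP => //= /negbT jP.
by rewrite logical_at_notin_supp // addr0 in_supp pauli_at0 eqxx.
Qed.

Lemma card_concat_rep_supp (P : pauli N) j k :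
  (#|[set u in S | mxvec_index j k \in supp (concat_rep P u)]|
     <= if j \in supp P then (3 * #|S|) %/ 4 else 0)%N.
Proof.
case: ifP => jP; last first.
  rewrite leqn0 cards_eq0; apply/eqP/setP => u; rewrite in_set0.
  by apply/negbTE/setIdP => -[_]; rewrite supp_concat_rep jP.
rewrite leq_divRL // mulnC.
apply: leq_trans (card_stab_supp_le S0 SD Cin_weight1 k (logical_at_normalizer P j)).
rewrite leq_mul2l /=; apply/subset_leq_card/subsetP => u /setIdP[Su].
by rewrite supp_concat_rep jP => k_supp; apply/setIdP.
Qed.

Lemma card_concat_reps_supp (A : {set pauli N}) j k :
  (#|[set q in concat_reps A | mxvec_index j k \in supp q]|
     <= #|[set P in A | j \in supp P]| * ((3 * #|S|) %/ 4))%N.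
Proof.
set T := [set x in setX A S | mxvec_index j k \in supp (concat_rep x.1 x.2)].
have image_T : [set q in concat_reps A | mxvec_index j k \in supp q]
    \subset (fun x => concat_rep x.1 x.2) @: T.
  apply/subsetP => _ /setIdP[/imsetP[x xAS ->] x_supp].
  by apply/imsetP; exists x => //; apply/setIdP.
apply: leq_trans (subset_leq_card image_T) _; apply: leq_trans (leq_imset_card _ _) _.
have -> : #|T| = (\sum_(P in A) #|[set u in S | mxvec_index j k \in supp (concat_rep P u)]|)%N.
  under eq_bigr do rewrite -sum1_card.
  by rewrite pair_big_dep sum1dep_card; apply: eq_card => -[P u]; rewrite !inE andbA.
apply: (@leq_trans (\sum_(P in A) if j \in supp P then (3 * #|S|) %/ 4 else 0)%N).
  by apply: leq_sum => P _; apply: card_concat_rep_supp.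
rewrite -big_mkcondr (eq_bigl (fun P => P \in [set P in A | j \in supp P])) ?sum_nat_const //.
by move=> P; rewrite inE.
Qed.

Lemma concat_reps_disjoint (A : {set pauli N}) c : c_disjoint A c ->
  c_disjoint (concat_reps A) (c * ((3 * #|S|) %/ 4)).
Proof.
move=> /forallP disjA; apply/forallP => i; case/mxvec_indexP: i => j k.
by apply: leq_trans (card_concat_reps_supp A j k) _; rewrite leq_mul2r disjA orbT.
Qed.

Lemma has_disjoint_reps_concat (L : pauli N) m c : has_disjoint_reps Cout L m c ->
  has_disjoint_reps (concat Cout Cin) (encode Cin L) (m * #|S|) (c * ((3 * #|S|) %/ 4)).
Proof.
case=> A [repsA A0 cardA disjA]; exists (concat_reps A); split.
- apply/subsetP => _ /imsetP[[P u] /setXP[AP Su] ->].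
  exact: concat_rep_reps (subsetP repsA _ AP) Su.
- apply/negP => /imsetP[[P u] /setXP[AP Su] /esym/(concat_rep_eq0 Su) P0].
  by move: A0; rewrite -P0 AP.
- by rewrite card_in_imset ?cardsX ?cardA //; apply: concat_rep_inj.
- exact: concat_reps_disjoint.
Qed.

Lemma logical_disjoint_reps_concat m c : logical_disjoint_reps Cout m c ->
  logical_disjoint_reps (concat Cout Cin) (m * #|S|) (c * ((3 * #|S|) %/ 4)).
Proof.
move=> dCout _ /[!logicals_concat] /mapP[L LC ->].
exact: has_disjoint_reps_concat (dCout L LC).
Qed.

End Concatenation.

Lemma c_disjoint_card N (A : {set pauli N}) : c_disjoint A #|A|.
Proof. by apply/forallP => i; apply/subset_leq_card/subsetP => p /setIdP[]. Qed.

Lemma c_disjoint_minn N (A : {set pauli N}) c c' :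
  c_disjoint A c -> c_disjoint A c' -> c_disjoint A (minn c c').
Proof. by move=> /forallP dc /forallP dc'; apply/forallP => i; rewrite leq_min dc dc'. Qed.

Lemma logicals_triv_neq0 L : L \in logicals triv_code -> L != 0.
Proof.
have nz_at (p : pauli 1) : pauli_at p ord0 != 0 -> p != 0.
  by apply: contraNneq => ->; rewrite pauli_at0.
by rewrite !inE => /or3P[] /eqP ->; apply: nz_at; rewrite ?pauli_atD /pauli_at /= !mxE.
Qed.

Lemma logical_disjoint_reps_triv : logical_disjoint_reps triv_code 1 1.
Proof.
move=> L /logicals_triv_neq0 L_neq0; exists [set L]; split.
- by rewrite sub1set; apply/imsetP; exists 0; [rewrite /= in_set1 | exact/esym/addr0].
- by rewrite in_set1 eq_sym.
- by rewrite cards1.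
- by have := c_disjoint_card [set L]; rewrite cards1.
Qed.

Lemma distance_gt1_weight1_stab N (C : stab_code N) d :
  has_distance C d -> (1 < d)%N ->
  forall p, p \in normalizer C -> (weight p <= 1)%N -> p \in stab C.
Proof.
move=> [_ d_min] d_gt1 p Np wp; apply/negPn/negP => pS.
by have := d_min p; rewrite inE pS Np => /(_ isT); lia.
Qed.

Lemma card_stab_gt1 N (C : stab_code N) d :
  is_stab_code_1 C -> has_distance C d -> (1 < d)%N -> (1 < #|stab C|)%N.
Proof.
move=> [[_ _ _ _ ->] _] [[p _ wp] _] d_gt1.
have wp_le : (weight p <= N)%N by rewrite /weight -[N in (_ <= N)%N]card_ord max_card.
by rewrite -[1%N]/(2 ^ 0)%N ltn_exp2l //; lia.
Qed.

Lemma cat_code_logical_disjoint_reps (n d : nat -> nat) (C : forall i, stab_code (n i)) :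
  (forall i, is_stab_code_1 (C i) /\ has_distance (C i) (d i) /\ (1 < d i)%N) ->
  forall l, exists m c,
    [/\ (0 < c)%N, (4 ^ l * c <= 3 ^ l * m)%N & logical_disjoint_reps (cat_code C l) m c].
Proof.
move=> codeC; elim=> [|l [m [c [c_gt0 mc disj]]]].
  by exists 1%N, 1%N; split=> //; apply: logical_disjoint_reps_triv.
have [code [dist d_gt1]] := codeC l.
have S_gt1 := card_stab_gt1 code dist d_gt1.
set s := #|stab (C l)|; set q := ((3 * s) %/ 4)%N.
have q4 : (q * 4 <= 3 * s)%N := leq_divM _ _.
exists (m * s)%N, (c * q)%N; split.
- by rewrite muln_gt0 c_gt0 divn_gt0 //; lia.
- by rewrite !expnS; nia.
- exact: logical_disjoint_reps_concat code (distance_gt1_weight1_stab dist d_gt1) _ _ disj.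
Qed.

Lemma card_pauli N : #|{: pauli N}| = (4 ^ N)%N.
Proof. by rewrite card_prod card_mx card_Fp // mul1n -expnMn. Qed.

Lemma udisj_ge N (C : stab_code N) m c :
  logical_disjoint_reps C m c -> (m <= udisj C (minn c m))%N.
Proof.
have mdr_ge L : has_disjoint_reps C L m c -> (m <= max_disjoint_reps C L (minn c m))%N.
  case=> A [repsA _ <- disjA].
  apply: (leq_bigmax_cond (F := fun A : {set pauli N} => #|A|)).
  by rewrite repsA (c_disjoint_minn disjA (c_disjoint_card A)).
by move=> dC; rewrite /udisj !leq_min !mdr_ge //; apply: dC; rewrite !inE eqxx ?orbT.
Qed.

Lemma disj_c_le_disjointness N (C : stab_code N) c :
  (0 < c <= 4 ^ N)%N -> disj_c C c <= disjointness C.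
Proof. by move=> c_range; apply: le_bigmax_seq; rewrite ?mem_index_iota ?ltnS. Qed.

Lemma disjointness_ge N (C : stab_code N) m c K :
  (0 < c)%N -> (0 < m)%N -> (K * c <= m)%N -> logical_disjoint_reps C m c ->
  K%:R <= disjointness C.
Proof.
(* c may exceed 4 ^ N, the range of [disjointness], but m operators are m-disjoint. *)
move=> c_gt0 m_gt0 Kc_le dC; set c' := minn c m.
have c'_gt0 : (0 < c')%N by rewrite leq_min c_gt0.
have m_le : (m <= 4 ^ N)%N.
  have [A [_ _ <- _]] := dC _ (mem_head _ _).
  by rewrite -card_pauli max_card.
have c'_range : (0 < c' <= 4 ^ N)%N by rewrite c'_gt0 (leq_trans (geq_minr _ _)).
apply: le_trans _ (disj_c_le_disjointness C c'_range).
rewrite /disj_c ler_pdivlMr ?ltr0n // -natrM ler_nat.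
apply: leq_trans (udisj_ge dC); apply: leq_trans Kc_le.
by rewrite leq_mul2l geq_minl orbT.
Qed.

(* (4/3)^l >= 1 + l/3, cleared of denominators. *)
Lemma bernoulli_4_3 l : (3 ^ l * (l + 3) <= 3 * 4 ^ l)%N.
Proof. by elim: l => [|l IHl] //; rewrite !expnS; nia. Qed.

Theorem theorem3 (n d : nat -> nat) (C : forall i, stab_code (n i)) :
  (exists B : nat, forall i, (n i <= B)%N) ->
  (forall i, is_stab_code_1 (C i) /\ has_distance (C i) (d i) /\ (1 < d i)%N) ->
  forall M : rat, exists l0 : nat, forall l : nat, (l0 <= l)%N ->
    M <= disjointness (cat_code C l).
Proof.
move=> _ codeC M.
have [K M_le_K] : exists K : nat, M <= K%:R.
  exists (Num.Def.archi_bound `|M|).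
  exact: le_trans (ler_norm M) (ltW (archi_boundP (normr_ge0 M))).
exists (3 * K)%N => l l_ge.
have [m [c [c_gt0 mc dC]]] := cat_code_logical_disjoint_reps codeC l.
have growth := bernoulli_4_3 l.
have pow3_gt0 : (0 < 3 ^ l)%N by rewrite expn_gt0.
have pow4_gt0 : (0 < 4 ^ l)%N by rewrite expn_gt0.
by apply: le_trans M_le_K (disjointness_ge c_gt0 _ _ dC); nia.
Qed.
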